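(* Let $\mathcal A\subset\mathbb R^n$ be compact with diameter $D_{\mathcal A}<\infty$, let $\mathcal X=\mathrm{conv}(\mathcal A)$ or $\mathcal X=\mathrm{lin}(\mathcal A)$, and let $f$ be differentiable with $L$-Lipschitz gradient. Let $\{x_t\}_{t\ge0}$ be generated by the AC-FW algorithm described in the context, and assume Conditions (D) and (S) hold. Fix $\eta>1$. Then for every $t\ge0$: (i) $f(x_{t+1})\le f(\bar x_{t+1})\le f(x_t)-\gamma_t\nabla f(x_t)^\top d_t+\frac{L_{t+1}}{2}\gamma_t^2\|d_t\|_2^2$; (ii) if $t\in\mathcal I_\eta$, then $f(x_{t+1})\le f(x_t)-\left(1-\frac{\eta}{2}\right)\gamma_t\nabla f(x_t)^\top d_t$; (iii) if $t\in\mathcal G\cap\mathcal I_\eta$, then $f(x_{t+1})\le f(x_t)-\left(1-\frac{\eta}{2}\right)\min\left\{1,\frac{\nabla f(x_t)^\top d_t}{L_t\|d_t\|_2^2}\right\}\nabla f(x_t)^\top d_t$; (iv) if in addition $f$ is convex and $\mathcal X=\mathrm{conv}(\mathcal A)$, then $\nabla f(x_t)^\top(x_t-v_t)\ge f(x_t)-f(x^\star)$.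
   Context: $D_{\mathcal A}:=\sup_{x,y\in\mathcal A}\|x-y\|_2$. $f:\mathbb R^n\to\mathbb R$ satisfies $\|\nabla f(x)-\nabla f(y)\|_2\le L\|x-y\|_2$ for all $x,y$. $x^\star$ denotes an optimal solution of $\min_{x\in\mathcal X}f(x)$. For $x\neq y$ let $\ell(x,y):=2|f(y)-f(x)-\nabla f(x)^\top(y-x)|/\|y-x\|_2^2$, and $\ell(x,x):=0$. AC-FW algorithm: given a damping sequence $\{r_t\}_{t\ge0}$ and a direction-finding subroutine, pick $x_{-1}\in\mathcal A$, $x_0\in\arg\min_{v\in\mathcal A}\nabla f(x_{-1})^\top v$, $L_0:=\ell(x_{-1},x_0)$. For $t=0,1,2,\dots$: choose $v_t\in\arg\min_{v\in\mathcal A}\nabla f(x_t)^\top v$; the subroutine returns $d_t\in\mathbb R^n$ and $\gamma_t^{\max}\in(0,\infty]$; set $\gamma_t:=\min\{\nabla f(x_t)^\top d_t/(L_t\|d_t\|_2^2),\gamma_t^{\max}\}$, $\bar x_{t+1}:=x_t-\gamma_t d_t$, $L_{t+1}:=\max\{\ell(x_t,\bar x_{t+1}),r_tL_t\}$, and $x_{t+1}:=\bar x_{t+1}$ if $f(\bar x_{t+1})<f(x_t)$, else $x_{t+1}:=x_t$. For $\eta>1$: $\mathcal I_\eta:=\{t\ge0:L_{t+1}\le\eta L_t\}$; $\mathcal G:=\{t\ge0:\gamma_t^{\max}\ge1\text{ or }\gamma_t<\gamma_t^{\max}\}$. Condition (D): $r_t\in(0,1]$ for all $t$ and $\prod_{t\ge0}r_t\in(0,1]$.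 Condition (S): for every $t\ge0$: (i) $\|d_t\|_2\le D_{\mathcal A}$ and $x_t-\gamma d_t\in\mathcal X$ for every (finite) $\gamma\in[0,\gamma_t^{\max}]$; (ii) $\mathcal G$ is infinite; (iii) if $f$ is convex, there is a constant $R\ge1$ independent of $t$ with $\nabla f(x_t)^\top d_t\ge (f(x_t)-f(x^\star))/R$. *)

From HB Require Import structures.
From mathcomp Require Import all_boot all_order all_algebra.
From mathcomp Require Import all_classical all_reals all_analysis.
Set Implicit Arguments. Unset Strict Implicit. Unset Printing Implicit Defensive.
Import Order.TTheory GRing.Theory Num.Theory.
Import numFieldNormedType.Exports.
Local Open Scope classical_set_scope.
Local Open Scope ring_scope.

Section Defs.
Variables (R : realType) (n : nat).
Notation vec := 'rV[R]_n.

Definition dot (u v : vec) : R := \sum_(i < n) u ord0 i * v ord0 i.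
Definition norm2 (v : vec) : R := Num.sqrt (dot v v).

Definition diam2 (A : set vec) : R :=
  sup [set r | exists x y, A x /\ A y /\ r = norm2 (x - y)].

Definition convhull (A : set vec) : set vec :=
  [set x | exists (k : nat) (w : 'I_k -> R) (a : 'I_k -> vec),
     (forall i, 0 <= w i) /\ \sum_(i < k) w i = 1 /\ (forall i, A (a i)) /\
     x = \sum_(i < k) w i *: a i].

Definition linspan (A : set vec) : set vec :=
  [set x | exists (k : nat) (w : 'I_k -> R) (a : 'I_k -> vec),
     (forall i, A (a i)) /\ x = \sum_(i < k) w i *: a i].

Definition convex_fun (f : vec -> R) : Prop :=
  forall (x y : vec) (lam : R), 0 <= lam <= 1 ->
    f (lam *: x + (1 - lam) *: y) <= lam * f x + (1 - lam) * f y.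

Definition ell (f : vec -> R) (grad : vec -> vec) (x y : vec) : R :=
  if x == y then 0
  else 2 * `|f y - f x - dot (grad x) (y - x)| / (norm2 (y - x)) ^+ 2.

Definition step (g Lt : R) (d : vec) (gmax : \bar R) : R :=
  match gmax with
  | EFin m => Num.min (g / (Lt * norm2 d ^+ 2)) m
  | _ => g / (Lt * norm2 d ^+ 2)
  end.

End Defs.

(* (i) reads the definition of [ell] as a quadratic upper bound on [f] with
   curvature [ell], which [L_(t+1)] dominates, and [x_(t+1)] is the better of
   [x_t] and [xbar_(t+1)].  For (ii) and (iii), with [g = grad f(x_t)^T d_t],
   the step never overshoots the minimiser [g / (L_t ||d||^2)] of the model, so
   [L_t ||d||^2 gamma^2 <= gamma g]; on a good step it is that minimiser or at
   least [1].  (iv) is the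
   first-order characterisation of convexity, together with the fact that a
   linear functional minimised over [A] is minimised over [conv A]. *)

From HB Require Import structures.
From mathcomp Require Import all_boot all_order all_algebra.
From mathcomp Require Import all_classical all_reals all_analysis.
From mathcomp Require Import ring lra.
Set Implicit Arguments.
Unset Strict Implicit.
Unset Printing Implicit Defensive.
Import Order.TTheory GRing.Theory Num.Theory.
Import numFieldNormedType.Exports.
Local Open Scope classical_set_scope.
Local Open Scope ring_scope.

Section InnerProduct.
Variables (R : realType) (n : nat).
Implicit Types (u a b : 'rV[R]_n) (c : R).

Lemma dot0r u : dot u 0 = 0.
Proof. by rewrite /dot big1 // => i _; rewrite mxE mulr0. Qed.

Lemma dotDr u a b : dot u (a + b) = dot u a + dot u b.
Proof. by rewrite /dot -big_split; apply: eq_bigr => i _; rewrite mxE mulrDr. Qed.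

Lemma dotZr u c a : dot u (c *: a) = c * dot u a.
Proof. by rewrite /dot mulr_sumr; apply: eq_bigr => i _; rewrite mxE mulrCA. Qed.

Lemma dotBr u a b : dot u (a - b) = dot u a - dot u b.
Proof. by rewrite dotDr -scaleN1r dotZr mulN1r. Qed.

Lemma dotZl u c a : dot (c *: a) u = c * dot a u.
Proof. by rewrite /dot mulr_sumr; apply: eq_bigr => i _; rewrite mxE mulrA. Qed.

Lemma dot_sumr u k (w : 'I_k -> R) (a : 'I_k -> 'rV[R]_n) :
  dot u (\sum_(i < k) w i *: a i) = \sum_(i < k) w i * dot u (a i).
Proof.
elim: k w a => [|k IHk] w a; first by rewrite !big_ord0 dot0r.
by rewrite !big_ord_recr /= dotDr dotZr IHk.
Qed.

Lemma dot_ge0 a : 0 <= dot a a.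
Proof. by apply: sumr_ge0 => i _; rewrite -expr2 sqr_ge0. Qed.

Lemma dot_eq0 a : dot a a = 0 -> a = 0.
Proof.
have sqr_entry_ge0 i : 0 <= a ord0 i * a ord0 i by rewrite -expr2 sqr_ge0.
move=> /(psumr_eq0P (fun i _ => sqr_entry_ge0 i)) a0; apply/rowP => i.
by have /eqP := a0 i isT; rewrite mulf_eq0 orbb mxE => /eqP.
Qed.

Lemma norm2_eq0 a : (norm2 a == 0) = (a == 0).
Proof.
rewrite /norm2 sqrtr_eq0; apply/idP/eqP => [a_le0|->]; last by rewrite dot0r.
by apply: dot_eq0; apply/eqP; rewrite eq_le a_le0 dot_ge0.
Qed.

Lemma norm2Z c a : norm2 (c *: a) = `|c| * norm2 a.
Proof. by rewrite /norm2 dotZl dotZr mulrA -expr2 sqrtrM ?sqr_ge0 // sqrtr_sqr. Qed.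

End InnerProduct.

Lemma dot_convhull_ge (R : realType) (n : nat) (A : set 'rV[R]_n) (g v y : 'rV[R]_n) :
  (forall u, A u -> dot g v <= dot g u) -> convhull A y -> dot g v <= dot g y.
Proof.
move=> v_min [k [w [a [w_ge0 [w_sum1 [aA ->]]]]]].
rewrite dot_sumr -[leLHS]mul1r -w_sum1 mulr_suml.
by apply: ler_sum => i _; apply: ler_wpM2l => //; apply: v_min.
Qed.

Section Differentiable.
Variables (R : realType) (n : nat) (f : 'rV[R]_n -> R).

Lemma ell_ge0 grad x y : 0 <= ell f grad x y.
Proof. by rewrite /ell; case: (x == y) => //; rewrite divr_ge0 ?sqr_ge0 ?mulr_ge0. Qed.

Lemma ell_quadratic_bound grad x y :
  f y <= f x + dot (grad x) (y - x) + ell f grad x y / 2 * norm2 (y - x) ^+ 2.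
Proof.
rewrite /ell; have [->|xy] := eqVneq x y; first by rewrite !mul0r addr0 subrr dot0r addr0.
have N_neq0 : norm2 (y - x) != 0 by rewrite norm2_eq0 subr_eq0 eq_sym.
set E := f y - f x - _.
have -> : 2 * `|E| / norm2 (y - x) ^+ 2 / 2 * norm2 (y - x) ^+ 2 = `|E| by field.
by have := ler_norm E; rewrite /E; lra.
Qed.

Lemma convex_derive_le x y :
  convex_fun f -> derivable f x (y - x) -> 'D_(y - x) f x <= f y - f x.
Proof.
move=> f_cvx f_der; set v := y - x.
set q := fun h : R => h^-1 *: ((f \o shift x) (h *: v) - f x).
have q_cvg : q @ 0^'+ --> 'D_v f x.
  move=> B /f_der /nbhs_ballP [e e_gt0 qB].
  by exists e => //= z ze /gt_eqF/negbT/qB; exact.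
apply: (cvgr_to_le q_cvg); near=> h.
have h_gt0 : 0 < h by near: h; exact: nbhs_right_gt.
have h_le1 : h <= 1 by near: h; apply: nbhs_right_le; exact: ltr01.
have := f_cvx y x h; rewrite (ltW h_gt0) h_le1 => /(_ isT).
have -> : h *: y + (1 - h) *: x = h *: v + x.
  by rewrite /v scalerBr scalerBl scale1r addrA addrAC.
rewrite /q /= => cvx_h; rewrite -[_ *: _]/(_ * _) mulrC ler_pdivrMr //.
have -> : (f y - f x) * h = h * f y + (1 - h) * f x - f x by ring.
by rewrite lerD2r.
Unshelve. all: by end_near.
Qed.

Lemma convex_first_order grad x y :
  convex_fun f -> differentiable f x -> (forall u, 'd f x u = dot (grad x) u) ->
  f x + dot (grad x) (y - x) <= f y.
Proof.
move=> f_cvx f_diff df_dot.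
have := convex_derive_le (y := y) f_cvx (diff_derivable f_diff).
by rewrite deriveE // df_dot lerBrDl.
Qed.

End Differentiable.

Lemma min_mul_subr_le0 (R : realFieldType) (q m : R) :
  0 < m -> Num.min q m * (Num.min q m - q) <= 0.
Proof.
move=> m_gt0; have [_|mq] := leP q m; first by rewrite subrr mulr0.
by rewrite mulr_ge0_le0 // ?subr_le0 ltW.
Qed.

Lemma divr_gt0_numer (R : realFieldType) (g P : R) : 0 <= P -> 0 < g / P -> 0 < g.
Proof.
move=> P_ge0; apply: contraLR; rewrite -!leNgt => g_le0.
by rewrite mulr_le0_ge0 ?invr_ge0.
Qed.

Lemma mulr_sqr_le_of_quot (R : realFieldType) (g P s : R) :
  0 <= P -> s * (s - g / P) <= 0 -> P * s ^+ 2 <= s * g.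
Proof.
rewrite le_eqVlt => /predU1P [<-|P_gt0] s_le.
  (* [g / 0 = 0], so the hypothesis reads [s ^+ 2 <= 0] *)
  rewrite invr0 mulr0 subr0 -expr2 in s_le.
  have /eqP -> : s == 0 by rewrite -sqrf_eq0 eq_le s_le sqr_ge0.
  by rewrite !mul0r.
have -> : P * s ^+ 2 = s * g + P * (s * (s - g / P)) by field; rewrite gt_eqF.
by rewrite gerDl pmulr_rle0.
Qed.

Lemma min1_mul_le (R : realFieldType) (g P s : R) :
  0 <= P -> s = g / P \/ 1 <= s <= g / P -> Num.min 1 (g / P) * g <= s * g.
Proof.
move=> P_ge0 s_cases; have [q_le1|q_gt1] := leP (g / P) 1.
  by have -> : s = g / P by case: s_cases => [//|/andP]; lra.
have g_gt0 : 0 < g by apply: (divr_gt0_numer P_ge0); lra.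
rewrite mul1r ler_peMl ?(ltW g_gt0) //.
by case: s_cases => [->|/andP []]; lra.
Qed.

Lemma min1_mul_ge0 (R : realFieldType) (g P : R) : 0 <= P -> 0 <= Num.min 1 (g / P) * g.
Proof.
move=> P_ge0; have [q_le1|q_gt1] := leP (g / P) 1.
  by rewrite mulrAC -expr2 mulr_ge0 ?sqr_ge0 ?invr_ge0.
rewrite mul1r ltW // (divr_gt0_numer P_ge0) //; lra.
Qed.

Section StepSize.
Variables (R : realType) (n : nat) (g L : R) (d : 'rV[R]_n) (gm : \bar R).
Hypothesis gm_gt0 : (0 < gm)%E.

Lemma step_mul_subr_le0 :
  step g L d gm * (step g L d gm - g / (L * norm2 d ^+ 2)) <= 0.
Proof.
move: gm_gt0; rewrite /step; case: gm => [m||] //=; last by rewrite subrr mulr0.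
by rewrite lte_fin; exact: min_mul_subr_le0.
Qed.

Lemma step_sq_le : 0 <= L -> L * norm2 d ^+ 2 * step g L d gm ^+ 2 <= step g L d gm * g.
Proof. by move=> L_ge0; apply: mulr_sqr_le_of_quot step_mul_subr_le0; rewrite mulr_ge0 ?sqr_ge0. Qed.

Lemma step_unclipped_or_ge1 :
  ((1%:E <= gm)%E \/ ((step g L d gm)%:E < gm)%E) ->
  step g L d gm = g / (L * norm2 d ^+ 2) \/
  1 <= step g L d gm <= g / (L * norm2 d ^+ 2).
Proof.
move: gm_gt0; rewrite /step; case: gm => [m||] //= _; last by left.
rewrite !lee_fin !lte_fin; set q := g / _.
have [_|mq] := leP q m; first by left.
by rewrite ltxx => -[m_ge1|//]; right; rewrite m_ge1 ltW.
Qed.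

End StepSize.

Section ACFWStep.
Variables (R : realType) (n : nat) (f : 'rV[R]_n -> R) (grad : 'rV[R]_n -> 'rV[R]_n).
Variables (x d xbar x' : 'rV[R]_n) (gm : \bar R) (gam Lx Lx' : R).
Hypotheses (gm_gt0 : (0 < gm)%E) (Lx_ge0 : 0 <= Lx).
Hypotheses (gamE : gam = step (dot (grad x) d) Lx d gm) (xbarE : xbar = x - gam *: d).
Hypotheses (ell_le : ell f grad x xbar <= Lx').
Hypothesis x'E : x' = if f xbar < f x then xbar else x.

Lemma acfw_next_le : f x' <= f xbar /\ f x' <= f x.
Proof. by rewrite x'E; case: ltP => [/ltW|]. Qed.

Lemma acfw_descent :
  f xbar <= f x - gam * dot (grad x) d + Lx' / 2 * gam ^+ 2 * norm2 d ^+ 2.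
Proof.
have := ell_quadratic_bound f grad x xbar.
have -> : xbar - x = (- gam) *: d by rewrite xbarE addrAC subrr add0r scaleNr.
rewrite dotZr norm2Z exprMn real_normK ?num_real // sqrrN => fxbar_le.
have : ell f grad x xbar * (gam ^+ 2 * norm2 d ^+ 2) <= Lx' * (gam ^+ 2 * norm2 d ^+ 2).
  by apply: ler_wpM2r; rewrite // mulr_ge0 ?sqr_ge0.
rewrite !mulrA in fxbar_le *; lra.
Qed.

Lemma acfw_descent_damped eta : 0 <= eta -> Lx' <= eta * Lx ->
  f x' <= f x - (1 - eta / 2) * gam * dot (grad x) d.
Proof.
move=> eta_ge0 Lx'_le.
have [x'_le _] := acfw_next_le.
have := acfw_descent.
have : Lx' * (gam ^+ 2 * norm2 d ^+ 2) <= eta * Lx * (gam ^+ 2 * norm2 d ^+ 2).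
  by apply: ler_wpM2r; rewrite // mulr_ge0 ?sqr_ge0.
have : eta / 2 * (Lx * norm2 d ^+ 2 * gam ^+ 2) <= eta / 2 * (gam * dot (grad x) d).
  by apply: ler_wpM2l; rewrite ?divr_ge0 // gamE step_sq_le.
lra.
Qed.

Lemma acfw_descent_good eta : 0 <= eta ->
  ((1%:E <= gm)%E \/ (gam%:E < gm)%E) -> Lx' <= eta * Lx ->
  f x' <= f x - (1 - eta / 2)
    * Num.min 1 (dot (grad x) d / (Lx * norm2 d ^+ 2)) * dot (grad x) d.
Proof.
move=> eta_ge0 good Lx'_le.
have := acfw_descent_damped eta_ge0 Lx'_le.
have [_ x'_le_x] := acfw_next_le.
have P_ge0 : 0 <= Lx * norm2 d ^+ 2 by rewrite mulr_ge0 ?sqr_ge0.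
rewrite -!mulrA; set m := Num.min 1 _ * _.
have m_le : m <= gam * dot (grad x) d.
  by apply: min1_mul_le P_ge0 _; rewrite gamE; apply: step_unclipped_or_ge1 => //; rewrite -gamE.
have m_ge0 : 0 <= m := min1_mul_ge0 (dot (grad x) d) P_ge0.
have [eta_le2|eta_gt2] := leP eta 2.
  have : (1 - eta / 2) * m <= (1 - eta / 2) * (gam * dot (grad x) d).
    by rewrite ler_wpM2l //; lra.
  lra.
(* for [eta > 2] the claim is weaker than the monotonicity [f x' <= f x] *)
have : (1 - eta / 2) * m <= 0 by rewrite mulr_le0_ge0 //; lra.
lra.
Qed.

End ACFWStep.

Theorem lemma4 (R : realType) (n : nat)
  (A X : set 'rV[R]_n) (f : 'rV[R]_n -> R) (grad : 'rV[R]_n -> 'rV[R]_n)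
  (L : R) (xstar : 'rV[R]_n)
  (r : nat -> R)
  (xm1 : 'rV[R]_n) (x v d xbar : nat -> 'rV[R]_n)
  (gmax : nat -> \bar R) (gamma Lt : nat -> R) (eta : R) :
  (* setting *)
  compact A ->
  (X = convhull A \/ X = linspan A) ->
  (forall y, differentiable f y /\ forall u, 'd f y u = dot (grad y) u) ->
  (forall y z, norm2 (grad y - grad z) <= L * norm2 (y - z)) ->
  (* x^* is an optimal solution of min_{x in X} f(x) *)
  X xstar -> (forall y, X y -> f xstar <= f y) ->
  (* AC-FW algorithm *)
  A xm1 ->
  A (x 0%N) -> (forall u, A u -> dot (grad xm1) (x 0%N) <= dot (grad xm1) u) ->
  Lt 0%N = ell f grad xm1 (x 0%N) ->
  (forall t, A (v t) /\ forall u, A u -> dot (grad (x t)) (v t) <= dot (grad (x t)) u) ->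
  (forall t, (0 < gmax t)%E) ->
  (forall t, gamma t = step (dot (grad (x t)) (d t)) (Lt t) (d t) (gmax t)) ->
  (forall t, xbar t.+1 = x t - gamma t *: d t) ->
  (forall t, Lt t.+1 = Num.max (ell f grad (x t) (xbar t.+1)) (r t * Lt t)) ->
  (forall t, x t.+1 = if f (xbar t.+1) < f (x t) then xbar t.+1 else x t) ->
  (* Condition (D) *)
  (forall t, 0 < r t <= 1) ->
  (exists p : R, 0 < p <= 1 /\
     (fun N : nat => \prod_(i < N) r i) @ \oo --> p) ->
  (* Condition (S) *)
  (forall t, norm2 (d t) <= diam2 A /\
     forall g : R, 0 <= g -> (g%:E <= gmax t)%E -> X (x t - g *: d t)) ->
  (forall N, exists t, (N <= t)%N /\
     ((1%:E <= gmax t)%E \/ ((gamma t)%:E < gmax t)%E)) ->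
  (convex_fun f -> exists Rc : R, 1 <= Rc /\
     forall t, dot (grad (x t)) (d t) >= (f (x t) - f xstar) / Rc) ->
  1 < eta ->
  forall t : nat,
    (* (i) *)
    (f (x t.+1) <= f (xbar t.+1) /\
     f (xbar t.+1) <= f (x t) - gamma t * dot (grad (x t)) (d t)
                      + Lt t.+1 / 2 * gamma t ^+ 2 * norm2 (d t) ^+ 2) /\
    (* (ii) *)
    (Lt t.+1 <= eta * Lt t ->
     f (x t.+1) <= f (x t) - (1 - eta / 2) * gamma t * dot (grad (x t)) (d t)) /\
    (* (iii) *)
    (((1%:E <= gmax t)%E \/ ((gamma t)%:E < gmax t)%E) -> Lt t.+1 <= eta * Lt t ->
     f (x t.+1) <= f (x t) - (1 - eta / 2)
        * Num.min 1 (dot (grad (x t)) (d t) / (Lt t * norm2 (d t) ^+ 2))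
        * dot (grad (x t)) (d t)) /\
    (* (iv) *)
    (convex_fun f -> X = convhull A ->
     dot (grad (x t)) (x t - v t) >= f (x t) - f xstar).
Proof.
move=> _ _ f_diff _ Xxs _ _ _ _ Lt0 v_min gm_gt0 gammaE xbarE LtS xE _ _ _ _ _ eta_gt1 t.
have Lt_ge0 s : 0 <= Lt s by case: s => [|s]; rewrite ?Lt0 ?LtS ?le_max ell_ge0.
have ell_le : ell f grad (x t) (xbar t.+1) <= Lt t.+1 by rewrite LtS le_max lexx.
have eta_ge0 : 0 <= eta by rewrite ltW // (lt_trans ltr01).
split; last split; last split.
- split; first by have [] := acfw_next_le (xE t).
  exact: acfw_descent (xbarE t) ell_le.
- exact: acfw_descent_damped (gm_gt0 t) (Lt_ge0 t) (gammaE t) (xbarE t) ell_le (xE t) _ eta_ge0.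
- exact: acfw_descent_good (gm_gt0 t) (Lt_ge0 t) (gammaE t) (xbarE t) ell_le (xE t) _ eta_ge0.
- move=> f_cvx X_conv.
  have [f_diff_x df_dot] := f_diff (x t).
  have first_order := convex_first_order xstar f_cvx f_diff_x df_dot.
  have v_le : dot (grad (x t)) (v t) <= dot (grad (x t)) xstar.
    by apply: dot_convhull_ge (v_min t).2 _; rewrite -X_conv.
  by move: first_order; rewrite !dotBr; lra.
Qed.
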